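(* Let $m\geq 5$ be a square-free integer with $m\equiv 1\pmod 4$, and let $K=\mathbb{Q}(\sqrt m)$. Then: if $\lfloor\sqrt m\rfloor$ is an even integer greater than $2$, then $U_K=\{1\}\subset\mathcal{F}_K=\{1,\ \tfrac{-3+\lfloor\sqrt m\rfloor+\sqrt m}{2},\ 1+\min T_K\}$ with $\tfrac{-3+\lfloor\sqrt m\rfloor+\sqrt m}{2}=\min T_K$; if $m=5$, then $U_K=\mathcal{F}_K=\{\tfrac{-1+\sqrt5}{2}=2\cos(2\pi/5),\ 1,\ \tfrac{1+\sqrt5}{2}=2\cos(2\pi/10)\}$; if $\lfloor\sqrt m\rfloor$ is odd, then $U_K=\{1\}\subset\mathcal{F}_K=\{1,\ \tfrac{-2+\lfloor\sqrt m\rfloor+\sqrt m}{2},\ 1+\min T_K\}$ with $\tfrac{-2+\lfloor\sqrt m\rfloor+\sqrt m}{2}=\min T_K$.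
   Context: For a real number field $K$, $\wp_K$ is the set of Pisot numbers $\theta\in K$ (real algebraic integers $>1$ whose other conjugates have modulus $<1$) with $\mathbb{Q}(\theta)=K$, enumerated $\theta_1<\theta_2<\cdots$; $\mathcal{F}_K:=\{\theta_{n+1}-\theta_n\mid n\in\mathbb{N}\}$. $U_K$ is the set of root of unity trace numbers in $K$, i.e. positive algebraic integers of the form $2\cos(2k\pi/n)$ with $n\geq4$, $1\leq k\leq n-1$, $\gcd(k,n)=1$, lying in $K$. $T_K$ is the set of algebraic integers $\beta\in K$ with $\beta>2$ whose conjugate $\beta'$ (image under the nontrivial embedding of $K$) lies in $(-2,2)$, $\beta'\neq0$. *)

From HB Require Import structures.
From mathcomp Require Import all_boot all_order all_algebra.
From mathcomp Require Import all_classical all_reals all_analysis.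
Set Implicit Arguments. Unset Strict Implicit. Unset Printing Implicit Defensive.
Import Order.TTheory GRing.Theory Num.Theory.
Local Open Scope classical_set_scope.
Local Open Scope ring_scope.

Section Defs.
Variable R : realType.

Definition squarefree_nat (m : nat) : Prop :=
  forall d : nat, (d * d %| m)%N -> d = 1%N.

Definition alg_int (x : R) : Prop :=
  exists p : {poly int}, p \is monic /\ root (map_poly (intr : int -> R) p) x.

Definition sqm (m : nat) : R := Num.sqrt (m%:R).

Definition inK (m : nat) (x : R) : Prop :=
  exists a b : rat, x = ratr a + ratr b * sqm m.

(* Pisot numbers theta of K with Q(theta) = K.  theta = a + b sqrt m with b <> 0
   (i.e. theta irrational, so Q(theta) = K), and its only other conjugate is
   a - b sqrt m (image under the nontrivial embedding). *)
Definition pisotK (m : nat) : set R :=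
  [set t | alg_int t /\ 1 < t /\
     exists a b : rat, b != 0 /\ t = ratr a + ratr b * sqm m /\
       `|ratr a - ratr b * sqm m| < 1].

Definition FK (m : nat) : set R :=
  [set d | exists t1 t2, pisotK m t1 /\ pisotK m t2 /\ t1 < t2 /\
     (forall t, pisotK m t -> ~ (t1 < t /\ t < t2)) /\ d = t2 - t1].

Definition UK (m : nat) : set R :=
  [set x | 0 < x /\ alg_int x /\ inK m x /\
     exists n k : nat, [/\ (4 <= n)%N, (1 <= k <= n.-1)%N, coprime k n &
        x = 2 * cos (2 * k%:R * pi / n%:R)]].

Definition TK (m : nat) : set R :=
  [set b | alg_int b /\ 2 < b /\
     exists u v : rat, b = ratr u + ratr v * sqm m /\
       let b' := ratr u - ratr v * sqm m in (-2 < b' < 2) /\ b' != 0].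

Definition is_min (S : set R) (x : R) : Prop := S x /\ forall y, S y -> x <= y.

End Defs.

(* Since [m = 1 (mod 4)], the algebraic integers of [Q(sqrt m)] are the numbers
   [K + Q om] with [K, Q] integers and [om = (1 + sqrt m) / 2], and the conjugate of
   [K + Q om] is [K - Q al] with [al = (sqrt m - 1) / 2].  It is a Pisot number iff
   [Q >= 1] and [|K - Q al| < 1], i.e. [K] is [floor (Q al)] or [floor (Q al) + 1].
   Pisot numbers with different [Q] are more than [sqrt m - 2 > 0] apart, so they are
   ordered lexicographically by [(Q, K)]: consecutive ones differ either by [1] or by
   [floor ((Q + 1) al) - floor (Q al) + al], and since [al] is irrational the floor
   increment takes both values [floor al] and [floor al + 1].
   A root of unity trace [x = 2 cos (2 k pi / n)] satisfies [V_n x = 2] for the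
   Vieta-Lucas polynomial [V_n]; so does its conjugate, which therefore lies in
   [[-2, 2]].  With [0 < x < 2] this leaves [Q] in [{0, 1}], hence [x = 1] unless
   [m = 5].  Finally [al + floor al = (floor al - 1) + om] is the least number with
   [Q = 1] whose conjugate lies in [(-2, 2)], and [Q >= 2] only gives numbers larger
   than [2 sqrt m - 2]. *)

From HB Require Import structures.
From mathcomp Require Import all_boot all_order all_algebra.
From mathcomp Require Import all_classical all_reals all_analysis.
From mathcomp Require Import ring lra zify.
Set Implicit Arguments.
Unset Strict Implicit.
Unset Printing Implicit Defensive.
Import Order.TTheory GRing.Theory Num.Theory.
Local Open Scope classical_set_scope.
Local Open Scope ring_scope.

Section QuadraticPolynomial.
Variables (R : nzRingType) (c0 c1 : R).

Lemma polyseq_quad : Poly [:: c0; c1; 1] = [:: c0; c1; 1] :> seq R.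
Proof. by rewrite (PolyK (c := 0)) //= oner_neq0. Qed.

Lemma size_quad : size (Poly [:: c0; c1; 1]) = 3%N.
Proof. by rewrite polyseq_quad. Qed.

Lemma monic_quad : Poly [:: c0; c1; 1] \is monic.
Proof. by rewrite monicE lead_coefE polyseq_quad. Qed.

End QuadraticPolynomial.

Lemma horner_quad (R : comNzRingType) (c0 c1 x : R) :
  (Poly [:: c0; c1; 1]).[x] = x ^+ 2 + c1 * x + c0.
Proof. rewrite horner_Poly /=; ring. Qed.

Lemma horner_map_quad (F : nzRingType) (R : comNzRingType) (f : {rmorphism F -> R})
    (c0 c1 : F) (x : R) :
  (map_poly f (Poly [:: c0; c1; 1])).[x] = x ^+ 2 + f c1 * x + f c0.
Proof. by rewrite map_Poly /= rmorph1 horner_quad. Qed.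

Lemma dvdp_minimal_root (F R : fieldType) (f : {rmorphism F -> R}) (t : R)
    (p q : {poly F}) :
  p != 0 -> (map_poly f p).[t] = 0 -> (map_poly f q).[t] = 0 ->
  (forall r : {poly F}, (size r < size p)%N -> (map_poly f r).[t] = 0 -> r = 0) ->
  p %| q.
Proof.
move=> p_neq0 pt0 qt0 p_min; apply/modp_eq0P/p_min; first exact: ltn_modpN0.
have -> : q %% p = q - q %/ p * p by rewrite {2}(divp_eq q p) addrAC subrr add0r.
by rewrite rmorphB rmorphM /= hornerD hornerN hornerM pt0 qt0 mulr0 subr0.
Qed.

(* By Gauss's lemma [p] is a rational multiple of an integer divisor [p1] of [q]; as [p]
   and [q] are monic, that multiple is [lead_coef p1 = 1 or -1]. *)
Lemma dvdp_monic_int_coef (p : {poly rat}) (q : {poly int}) :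
  p \is monic -> q \is monic -> p %| map_poly intr q ->
  forall i, exists z : int, p`_i = z%:~R.
Proof.
move=> /monicP lp /monicP lq /dvdpP_rat_int [p1 [c _ def_p] [r def_q]].
have lp1_unit : lead_coef p1 * lead_coef r = 1 by rewrite -lead_coefM -def_q.
have lp1_sqr : lead_coef p1 * lead_coef p1 = 1.
  have /eqP := congr1 absz lp1_unit; rewrite abszM muln_eq1 => /andP[/eqP lp1 _].
  by case: (lead_coef p1) lp1 => [n /= ->|[|n]].
have def_c : c = (lead_coef p1)%:~R.
  move: lp; rewrite def_p lead_coefZ lead_coef_map_inj //=; last exact: intr_inj.
  move=> c_lp1; have := congr1 ( *%R^~ (lead_coef p1)%:~R) c_lp1.
  by rewrite /= -mulrA -rmorphM /= lp1_sqr mulr1 mul1r.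
by move=> i; exists (lead_coef p1 * p1`_i); rewrite def_p coefZ coef_map /= def_c rmorphM.
Qed.

Lemma alg_int_minpoly_int_coef (R : realType) (t : R) (p : {poly rat}) :
  alg_int t -> p \is monic -> (map_poly ratr p).[t] = 0 ->
  (forall r : {poly rat}, (size r < size p)%N -> (map_poly ratr r).[t] = 0 -> r = 0) ->
  forall i, exists z : int, p`_i = z%:~R.
Proof.
move=> [q [q_monic qt0]] p_monic pt0 p_min; apply: dvdp_monic_int_coef q_monic _ => //.
apply: (@dvdp_minimal_root _ _ ratr t p _ _ pt0 _ p_min); first exact: monic_neq0.
rewrite -map_poly_comp -(eqP qt0); congr _.[t]; apply: eq_map_poly; exact: ratr_int.
Qed.

Lemma alg_int_rat (R : realType) (a : rat) : alg_int (ratr a : R) -> exists z : int, a = z%:~R.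
Proof.
move=> a_int; have [z a_z] : exists z : int, ('X - a%:P)`_0 = z%:~R.
  apply: (alg_int_minpoly_int_coef a_int (monicXsubC a)).
    by rewrite map_polyXsubC hornerXsubC subrr.
  move=> r; rewrite size_XsubC => /size1_polyC ->; rewrite map_polyC hornerC.
  by move/eqP; rewrite fmorph_eq0 => /eqP ->.
by exists (- z); rewrite rmorphN /= -a_z coefB coefX coefC /= sub0r opprK.
Qed.

Section FloorSteps.
Variable R : archiRealFieldType.

Lemma floorD_sub (x y : R) :
  Num.floor (y + x) - Num.floor y = Num.floor x \/
  Num.floor (y + x) - Num.floor y = Num.floor x + 1.
Proof.
have /andP[x1 x2] := floor_itv x; have /andP[y1 y2] := floor_itv y.
have /andP[s1 s2] := floor_itv (y + x); rewrite !rmorphD /= in x2 y2 s2.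
have lt2 : Num.floor (y + x) - Num.floor y < Num.floor x + 2.
  by rewrite -(ltr_int R) rmorphB !rmorphD /=; lra.
have gtm1 : Num.floor x - 1 < Num.floor (y + x) - Num.floor y.
  by rewrite -(ltr_int R) !rmorphB /=; lra.
lia.
Qed.

(* If [n x] had constant floor increments [c], then [n (x - c)] would stay in [(-1, 1)]. *)
Lemma exists_floor_step_neq (x : R) (c : int) : x != c%:~R ->
  exists n : nat, Num.floor (n.+2%:R * x) - Num.floor (n.+1%:R * x) != c.
Proof.
move=> x_neq_c; apply: contrapT => no_step.
have steps n : Num.floor (n.+2%:R * x) - Num.floor (n.+1%:R * x) = c.
  by apply/eqP/negPn/negP => step; apply: no_step; exists n.
have floor_mul n : Num.floor (n.+1%:R * x) = Num.floor x + n%:Z * c.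
  elim: n => [|n IHn]; first by rewrite mul1r mul0r addr0.
  have := steps n; rewrite IHn; lia.
have small n : `|n%:R * (x - c%:~R)| < 1.
  have /andP[a1 a2] := floor_itv (n.+1%:R * x); have /andP[b1 b2] := floor_itv x.
  rewrite floor_mul !rmorphD rmorphM /= -natr1 mulrDl mul1r in a1 a2.
  rewrite rmorphD /= in b2.
  by rewrite ltr_norml; apply/andP; split; rewrite mulrBr; lra.
have d_gt0 : 0 < `|x - c%:~R| by rewrite normr_gt0 subr_eq0.
have := small (Num.bound (`|x - c%:~R|^-1)).
rewrite normrM ger0_norm ?ler0n // -ltr_pdivlMr // div1r ltNge => /negP; apply.
by rewrite ltW // archi_boundP // invr_ge0 ltW.
Qed.

End FloorSteps.

Lemma int_odd_double_half (s : int) : 0 <= s -> s = 2 * (`|s|%N./2)%:Z + odd `|s|%N.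
Proof. by move=> s_ge0; have := odd_double_half `|s|%N; rewrite -muln2; lia. Qed.

(* [(V_n y, V_(n+1) y)] for the Vieta-Lucas polynomials [V_0 = 2], [V_1 = 'X],
   [V_(n+2) = 'X V_(n+1) - V_n], characterised by [V_n (t + t^-1) = t^n + t^-n]. *)
Fixpoint lucas_pair (R : nzRingType) (n : nat) (y : R) : R * R :=
  if n is n'.+1 then let p := lucas_pair n' y in (p.2, y * p.2 - p.1) else (2, y).

Lemma lucas_pair_inv (R : fieldType) (t : R) (n : nat) : t != 0 ->
  lucas_pair n (t + t^-1) = (t ^+ n + t ^- n, t ^+ n.+1 + t ^- n.+1).
Proof.
move=> t_neq0; elim: n => [|n IHn] /=; first by rewrite expr0 invr1 expr1.
rewrite IHn /=; congr (_, _); rewrite !exprS; field.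
by rewrite expf_neq0 ?t_neq0.
Qed.

Lemma lucas_pair_cos (R : realType) (th : R) (n : nat) :
  lucas_pair n (2 * cos th) = (2 * cos (n%:R * th), 2 * cos (n.+1%:R * th)).
Proof.
elim: n => [|n IHn] /=; first by rewrite mul0r cos0 mulr1 mul1r.
rewrite IHn /=; congr (_, _).
have -> : n.+2%:R * th = n.+1%:R * th + th by rewrite -[n.+2%:R]natr1 mulrDl mul1r.
have -> : n%:R * th = n.+1%:R * th - th by rewrite -natr1 mulrDl mul1r addrK.
rewrite cosB cosD; ring.
Qed.

(* For [|y| > 2] write [y = t + t^-1] with [t] real; then [t^n + t^-n = 2] forces [t^n = 1]. *)
Lemma lucas_eq2_norm_le2 (R : rcfType) (y : R) (n : nat) :
  (0 < n)%N -> (lucas_pair n y).1 = 2 -> `|y| <= 2.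
Proof.
move=> n_gt0 Vn2; rewrite leNgt; apply/negP => y_gt2.
have disc_ge0 : 0 <= y ^+ 2 - 4.
  by rewrite subr_ge0 -real_normK ?num_real //; nra.
set s := Num.sqrt (y ^+ 2 - 4); have s_sqr : s ^+ 2 = y ^+ 2 - 4 by rewrite sqr_sqrtr.
set t := (y + s) / 2.
have t_inv : t * ((y - s) / 2) = 1.
  have -> : t * ((y - s) / 2) = (y ^+ 2 - s ^+ 2) / 4 by rewrite /t; field.
  by rewrite s_sqr; field.
have t_neq0 : t != 0 by apply: contra_eq_neq t_inv => ->; rewrite mul0r eq_sym oner_eq0.
have def_y : y = t + t^-1.
  have -> : t^-1 = (y - s) / 2 by apply: (mulfI t_neq0); rewrite mulfV // t_inv.
  by rewrite /t; field.
move: Vn2; rewrite def_y lucas_pair_inv //= => tn2.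
have tn_neq0 : t ^+ n != 0 by rewrite expf_neq0.
have tn1 : t ^+ n = 1.
  apply/eqP; rewrite -subr_eq0 -sqrf_eq0; apply/eqP.
  have -> : (t ^+ n - 1) ^+ 2 = t ^+ n * (t ^+ n + t ^- n - 2) by field.
  by rewrite tn2 subrr mulr0.
have t_norm1 : `|t| = 1.
  by apply/eqP; rewrite -(@eqrXn2 _ n) ?normr_ge0 // -normrX tn1 normr1 expr1n.
have t_invE : t^-1 = t.
  apply: (mulfI t_neq0); rewrite mulfV // -expr2 -real_normK ?num_real // t_norm1.
  by rewrite expr1n.
move: y_gt2; rewrite def_y t_invE -mulr2n normrMn t_norm1; lra.
Qed.

Lemma cos_2pi_mul (R : realType) (k : nat) : cos (2 * k%:R * pi) = 1 :> R.
Proof.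
have -> : 2 * k%:R * pi = 0 + (pi *+ 2) *+ k :> R by rewrite add0r -mulr_natr; ring.
by rewrite (periodicn (@cosD2pi R)) cos0.
Qed.

Lemma cos_2pi_div_lt1 (R : realType) (n k : nat) :
  (1 <= k <= n.-1)%N -> cos (2 * k%:R * pi / n%:R) < 1 :> R.
Proof.
move=> /andP[k_ge1 k_lt_n]; have n_gt0 : (0 : R) < n%:R by rewrite ltr0n; lia.
pose ph : R := k%:R * pi / n%:R.
have -> : 2 * k%:R * pi / n%:R = ph *+ 2 by rewrite /ph mulr2n; ring.
have sin_gt0 : 0 < sin ph.
  apply: sin_gt0_pi; apply/andP; split.
    by rewrite /ph divr_gt0 // mulr_gt0 ?pi_gt0 // ltr0n; lia.
  by rewrite /ph ltr_pdivrMr // mulrC ltr_pM2l ?pi_gt0 // ltr_nat; lia.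
rewrite cos_mulr2n cos2sin2; nra.
Qed.

Lemma cos_pi_sub (R : realType) (x : R) : cos (pi - x) = - cos x.
Proof. by rewrite cosB cospi sinpi mul0r addr0 mulN1r. Qed.

Lemma cos_pi3 (R : realType) : 2 * cos (pi / 3) = 1 :> R.
Proof.
have cos_gt0 : 0 < cos (pi / 3) :> R by apply: cos_gt0_pihalf; have := @pi_gt0 R; lra.
have := congr1 snd (lucas_pair_cos (pi / 3 : R) 1) => /=.
have -> : 2 * (pi / 3) = pi - pi / 3 :> R by field.
rewrite cos_pi_sub => V2.
have /eqP : (2 * cos (pi / 3) - 1) * (2 * cos (pi / 3) + 2) = 0 :> R by nra.
by rewrite mulf_eq0 => /orP[] /eqP; lra.
Qed.

Lemma cos_pi5 (R : realType) : 2 * cos (pi / 5) = (1 + Num.sqrt 5) / 2 :> R.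
Proof.
have y_gt0 : 0 < 2 * cos (pi / 5) :> R.
  by rewrite mulr_gt0 // cos_gt0_pihalf //; have := @pi_gt0 R; lra.
have V2 := congr1 fst (lucas_pair_cos (pi / 5 : R) 2).
have := congr1 snd (lucas_pair_cos (pi / 5 : R) 2) => /=.
have -> : 3 * (pi / 5) = pi - 2 * (pi / 5) :> R by field.
rewrite cos_pi_sub; move: V2 => /= V2 V3.
have r_sqr : Num.sqrt 5 ^+ 2 = 5 :> R by rewrite sqr_sqrtr // ler0n.
move: (Num.sqrt 5 : R) (sqrtr_ge0 (5 : R)) r_sqr => r r_ge0 r_sqr.
move: (2 * cos (pi / 5)) y_gt0 V2 V3 => y y_gt0 V2 V3.
have /eqP : (y + 2) * ((y - (1 + r) / 2) * (y - (1 - r) / 2)) = 0.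
  have -> : (y - (1 + r) / 2) * (y - (1 - r) / 2) = y * y - y + (1 - r ^+ 2) / 4.
    by field.
  by rewrite r_sqr; nra.
by rewrite !mulf_eq0 => /or3P[] /eqP; nra.
Qed.

Lemma cos_2pi5 (R : realType) : 2 * cos (2 * pi / 5) = (-1 + Num.sqrt 5) / 2 :> R.
Proof.
have := congr1 fst (lucas_pair_cos (pi / 5 : R) 2) => /=.
rewrite -mulrA => <-; rewrite cos_pi5.
have r_sqr : Num.sqrt 5 ^+ 2 = 5 :> R by rewrite sqr_sqrtr // ler0n.
move: (Num.sqrt 5 : R) r_sqr => r r_sqr; nra.
Qed.

Section QuadraticField.
Variables (R : realType) (m : nat).
Hypotheses (m_sqfree : squarefree_nat m) (m_ge5 : (5 <= m)%N) (m_mod4 : (m %% 4 = 1)%N).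

Local Notation w := (@sqm R m).
(* [om] generates the ring of integers [Z[om]] of [Q(w)]; its conjugate is [- al]. *)
Local Notation om := ((1 + w) / 2).
Local Notation al := ((w - 1) / 2).

Lemma sqm_sqr : w ^+ 2 = m%:R.
Proof. by rewrite sqr_sqrtr // ler0n. Qed.

Lemma sqm_gt2 : 2 < w.
Proof.
have w_ge0 : 0 <= w := sqrtr_ge0 _.
have := sqm_sqr; have : (5 : R) <= m%:R by rewrite ler_nat.
nra.
Qed.

Lemma sqr_mul_sqfree_int (r : rat) (z : int) :
  r ^+ 2 * m%:R = z%:~R -> exists y : int, r = y%:~R.
Proof.
move=> r2m; exists (numq r); rewrite -[LHS]divq_num_den.
suff -> : denq r = 1 by rewrite divr1.
have eq_int : (numq r * numq r * m%:Z = z * (denq r * denq r))%R.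
  have r_nd := esym (divq_num_den r); move: (denq_neq0 r) r_nd.
  set n := numq r; set d := denq r => d_neq0 r_nd.
  apply: (@intr_inj rat); rewrite !rmorphM /= -pmulrn -r2m r_nd.
  by field; rewrite intr_eq0.
have eq_abs : (`|numq r| * `|numq r| * m = `|z| * (`|denq r| * `|denq r|))%N.
  by have := congr1 absz eq_int; rewrite !abszM.
have den2_dvd : (`|denq r| * `|denq r| %| m)%N.
  rewrite -(@Gauss_dvdr _ (`|numq r| * `|numq r|)); first by rewrite eq_abs dvdn_mull.
  by rewrite coprimeMl !coprimeMr coprime_sym coprime_num_den.
have := m_sqfree den2_dvd; have := denq_gt0 r; lia.
Qed.

Lemma sqm_irrational (r : rat) : ratr r != w.
Proof.
apply/eqP => r_w.
have r2 : r ^+ 2 = m%:R.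
  by apply: (fmorph_inj (@ratr R)); rewrite rmorphXn /= r_w sqm_sqr rmorph_nat.
have [y def_r] : exists y : int, r = y%:~R.
  by apply: (@sqr_mul_sqfree_int r (m * m)%:Z); rewrite r2 -natrM.
have y2 : (y * y = m%:Z)%R.
  by apply: (@intr_inj rat); rewrite rmorphM /= -def_r -expr2 r2.
have ym : (`|y| * `|y| = m)%N by rewrite -abszM y2.
have := @m_sqfree `|y|%N; rewrite ym dvdnn => /(_ isT) y1; lia.
Qed.

Lemma sqm_lin_indep (a b : rat) : ratr a + ratr b * w = 0 -> a = 0 /\ b = 0.
Proof.
move=> ab0; have b0 : b = 0.
  apply: contraTeq (sqm_irrational (- a / b)) => b_neq0; apply/negPn/eqP.
  have bw : ratr b * w = - ratr a by apply/eqP; rewrite -addr_eq0 addrC ab0.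
  by rewrite fmorph_div rmorphN /= -bw mulrC mulKf ?fmorph_eq0.
by move: ab0; rewrite b0 rmorph0 mul0r addr0 => /eqP; rewrite fmorph_eq0 => /eqP.
Qed.

Lemma sqm_root_size_lt3 (a b : rat) (r : {poly rat}) : b != 0 -> (size r < 3)%N ->
  (map_poly ratr r).[ratr a + ratr b * w] = 0 -> r = 0.
Proof.
move=> b_neq0 r_size; have def_r : r = Poly [:: r`_0; r`_1].
  apply/polyP => -[|[|i]]; rewrite coef_Poly //= nth_nil nth_default //.
  by rewrite ltnS in r_size; apply: leq_trans r_size _.
rewrite def_r map_Poly horner_Poly /= mul0r add0r => root_r.
have [r0_b r1_b] : r`_0 + r`_1 * a = 0 /\ r`_1 * b = 0.
  by apply: sqm_lin_indep; rewrite rmorphD !rmorphM /= -root_r; ring.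
have r1 : r`_1 = 0 by move/eqP: r1_b; rewrite mulf_eq0 (negbTE b_neq0) orbF => /eqP.
have r0 : r`_0 = 0 by move: r0_b; rewrite r1 mul0r addr0.
by rewrite r0 r1 /= !cons_poly_def !(mul0r, add0r, polyC0).
Qed.

Lemma norm_parity (P Q z : int) : P ^+ 2 - Q ^+ 2 * m%:Z = 4 * z -> exists k, P = Q + 2 * k.
Proof.
move=> norm4.
have [e m_eq] : exists e : int, m%:Z = 4 * e + 1.
  by exists (m %/ 4)%N; have := divn_eq m 4; rewrite m_mod4; lia.
have PQ_div := divz_eq (P - Q) 2.
have : (0 <= (P - Q) %% 2 < 2)%Z by rewrite modz_ge0 // ltz_pmod.
set k := ((P - Q) %/ 2)%Z in PQ_div *; set r := ((P - Q) %% 2)%Z in PQ_div * => r_bounds.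
have [r0|r1] : r = 0 \/ r = 1 by lia.
  by exists k; lia.
have P_eq : P = Q + 2 * k + 1 by lia.
by rewrite P_eq m_eq in norm4; lia.
Qed.

(* For [b != 0] the minimal polynomial ['X^2 - 2 a 'X + (a^2 - b^2 m)] has integer
   coefficients; then [(2 b)^2 m] is an integer, so is [2 b] as [m] is squarefree, and
   [2 a = 2 b (mod 2)] because the norm [a^2 - b^2 m] is an integer. *)
Lemma alg_int_sqm (a b : rat) : alg_int (ratr a + ratr b * w) ->
  exists K Q : int, a = K%:~R + Q%:~R / 2 /\ b = Q%:~R / 2.
Proof.
move=> t_int; have [b0|b_neq0] := eqVneq b 0.
  have [z ->] : exists z : int, a = z%:~R.
    by apply: (@alg_int_rat R); move: t_int; rewrite b0 rmorph0 mul0r addr0.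
  by exists z, 0; rewrite b0 mul0r addr0.
pose p := Poly [:: a ^+ 2 - b ^+ 2 * m%:R; - (2 * a); 1].
have p_root : (map_poly ratr p).[ratr a + ratr b * w] = 0.
  rewrite horner_map_quad !(rmorphN, rmorphB, rmorphM, rmorphXn) /= !rmorph_nat -sqm_sqr.
  ring.
have p_min (r : {poly rat}) :
    (size r < size p)%N -> (map_poly ratr r).[ratr a + ratr b * w] = 0 -> r = 0.
  by rewrite size_quad; apply: sqm_root_size_lt3.
have p_int := alg_int_minpoly_int_coef t_int (monic_quad _ _) p_root p_min.
have [z0 norm_z0] := p_int 0; have [z1 trace_z1] := p_int 1.
rewrite coef_Poly /= in norm_z0; rewrite coef_Poly /= in trace_z1.
have [Q Q_def] : exists Q : int, 2 * b = Q%:~R.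
  apply: (@sqr_mul_sqfree_int _ (z1 ^+ 2 - 4 * z0)).
  rewrite !(rmorphB, rmorphM, rmorphXn) /= -norm_z0 -trace_z1; ring.
have [k z1_Q] : exists k, - z1 = Q + 2 * k.
  apply: (norm_parity (z := z0)); apply: (@intr_inj rat).
  rewrite !(rmorphB, rmorphM, rmorphXn, rmorphN) /= -norm_z0 -trace_z1 -Q_def -pmulrn.
  ring.
have a2 : 2 * a = (Q + 2 * k)%:~R by rewrite -z1_Q rmorphN /= -trace_z1 opprK.
exists k, Q; split; apply: (@mulfI _ 2) => //.
  by rewrite a2 rmorphD rmorphM /=; field.
by rewrite Q_def; field.
Qed.

Lemma alg_int_om (K Q : int) : alg_int (K%:~R + Q%:~R * om).
Proof.
have [e m_eq] : exists e : nat, m = (4 * e + 1)%N.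
  by exists (m %/ 4)%N; have := divn_eq m 4; rewrite m_mod4; lia.
exists (Poly [:: K ^+ 2 + K * Q - Q ^+ 2 * e%:Z; - (2 * K + Q); 1]); split.
  exact: monic_quad.
have w_sqr : w ^+ 2 = 4 * e%:R + 1 by rewrite sqm_sqr m_eq natrD natrM.
apply/eqP; rewrite horner_map_quad !(rmorphN, rmorphB, rmorphD, rmorphM, rmorphXn) /=.
rewrite -pmulrn -[RHS](mulr0 (Q%:~R ^+ 2 / 4)) -(subrr (w ^+ 2)) {2}w_sqr.
by field.
Qed.

Lemma ratr_om_coords (K Q : int) :
  ratr (K%:~R + Q%:~R / 2) + ratr (Q%:~R / 2) * w = K%:~R + Q%:~R * om /\
  ratr (K%:~R + Q%:~R / 2) - ratr (Q%:~R / 2) * w = K%:~R - Q%:~R * al.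
Proof. by rewrite rmorphD fmorph_div /= !ratr_int rmorph_nat; split; field. Qed.

Lemma alg_int_sqm_om (a b : rat) : alg_int (ratr a + ratr b * w) ->
  exists K Q : int, ratr a + ratr b * w = K%:~R + Q%:~R * om /\
                    ratr a - ratr b * w = K%:~R - Q%:~R * al.
Proof. by move=> /alg_int_sqm[K [Q [-> ->]]]; exists K, Q; apply: ratr_om_coords. Qed.

Lemma int_neq_mul_al (Q K : int) : Q != 0 -> K%:~R != Q%:~R * al.
Proof.
move=> Q_neq0; apply: contra_neq (sqm_irrational ((2 * K + Q)%:~R / Q%:~R)) => K_Qal.
rewrite fmorph_div /= !ratr_int rmorphD rmorphM /= K_Qal; field.
by rewrite intr_eq0.
Qed.

Lemma al_neq_int (c : int) : al != c%:~R.
Proof. by rewrite eq_sym -[al]mul1r -[1]/(1%:~R) int_neq_mul_al. Qed.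

Definition pisot_coords (Q K : int) : Prop := 0 < Q /\ `|K%:~R - Q%:~R * al| < 1.

Local Notation theta Q K := ((K : int)%:~R + (Q : int)%:~R * om).

Lemma pisotKP (t : R) : pisotK m t <-> exists Q K, pisot_coords Q K /\ t = theta Q K.
Proof.
have w_gt2 := sqm_gt2; split.
- case=> t_int [t_gt1 [a [b [_ [def_t conj_lt1]]]]]; rewrite def_t in t_int.
  have [K [Q [t_KQ conj_KQ]]] := alg_int_sqm_om t_int.
  rewrite conj_KQ ltr_norml in conj_lt1; rewrite t_KQ in def_t.
  exists Q, K; split=> //; split; last by rewrite ltr_norml.
  have /andP[c1 c2] := conj_lt1.
  have : 0 < Q%:~R * w :> R by rewrite def_t in t_gt1; lra.
  by rewrite pmulr_lgt0 ?ltr0z //; lra.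
- case=> Q [K [[Q_gt0 conj_lt1] ->]]; split; first exact: alg_int_om.
  have [t_coords conj_coords] := ratr_om_coords K Q.
  split.
    have Q_ge1 : 1 <= Q%:~R :> R by rewrite ler1z.
    move: conj_lt1; rewrite ltr_norml => /andP[c1 c2]; nra.
  exists (K%:~R + Q%:~R / 2), (Q%:~R / 2); split; last by rewrite conj_coords.
  by rewrite mulf_neq0 ?invr_eq0 // intr_eq0 gt_eqF.
Qed.

Lemma pisot_coordsP (Q K : int) :
  pisot_coords Q K <-> 0 < Q /\ Num.floor (Q%:~R * al) <= K <= Num.floor (Q%:~R * al) + 1.
Proof.
set F := Num.floor _; have /andP[F_le F_gt] := floor_itv (Q%:~R * al : R).
rewrite -/F rmorphD /= in F_le F_gt.
have F_lt : 0 < Q -> F%:~R < Q%:~R * al :> R.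
  by move=> Q_gt0; rewrite lt_neqAle F_le int_neq_mul_al ?gt_eqF.
split=> -[Q_gt0 K_bounds]; have {}F_lt := F_lt Q_gt0; split=> //.
- move: K_bounds; rewrite ltr_norml => /andP[c1 c2].
  have K_gt : F - 1 < K by rewrite -(ltr_int R) rmorphB /=; lra.
  have K_lt : K < F + 2 by rewrite -(ltr_int R) rmorphD /=; lra.
  lia.
- have [-> | ->] : K = F \/ K = F + 1 by lia.
  all: by rewrite ltr_norml ?rmorphD /=; apply/andP; split; lra.
Qed.

Lemma pisot_lt_lex (Q1 K1 Q2 K2 : int) : pisot_coords Q1 K1 -> pisot_coords Q2 K2 ->
  theta Q1 K1 < theta Q2 K2 <-> Q1 < Q2 \/ Q1 = Q2 /\ K1 < K2.
Proof.
move=> [_ c1] [_ c2]; move: c1 c2; rewrite !ltr_norml => /andP[c1 c1'] /andP[c2 c2'].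
have w_gt2 := sqm_gt2.
have theta_sub : theta Q2 K2 - theta Q1 K1 =
    (Q2 - Q1)%:~R * w + ((K2%:~R - Q2%:~R * al) - (K1%:~R - Q1%:~R * al)) :> R.
  by rewrite rmorphB /=; field.
have [Q12|Q21|<-] := ltgtP Q1 Q2.
- split=> _; first by left.
  have : 1 <= (Q2 - Q1)%:~R :> R by rewrite ler1z; lia.
  by rewrite -subr_gt0 theta_sub; nra.
- have : (Q2 - Q1 + 1)%:~R <= 0 :> R by rewrite lerz0; lia.
  rewrite rmorphD /= => Q21_le.
  have theta_lt : theta Q2 K2 < theta Q1 K1 by rewrite -subr_lt0 theta_sub; nra.
  by split; [rewrite ltNge (ltW theta_lt) | lia].
- by rewrite ltrD2r ltr_int; split; lia.
Qed.

Lemma FKP (d : R) : FK m d <-> exists Q1 K1 Q2 K2, [/\ pisot_coords Q1 K1, pisot_coords Q2 K2,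
    Q1 < Q2 \/ Q1 = Q2 /\ K1 < K2,
    (forall Q K, pisot_coords Q K ->
       ~ ((Q1 < Q \/ Q1 = Q /\ K1 < K) /\ (Q < Q2 \/ Q = Q2 /\ K < K2))) &
    d = theta Q2 K2 - theta Q1 K1].
Proof.
split.
- case=> _ [_ [/pisotKP[Q1 [K1 [c1 ->]]] [/pisotKP[Q2 [K2 [c2 ->]]] [lt12 [between ->]]]]].
  exists Q1, K1, Q2, K2; split=> //; first exact/(pisot_lt_lex c1 c2).
  move=> Q K c [lt1 lt2]; apply: (between (theta Q K)); first by apply/pisotKP; exists Q, K.
  by split; [apply/(pisot_lt_lex c1 c) | apply/(pisot_lt_lex c c2)].
- case=> Q1 [K1 [Q2 [K2 [c1 c2 lex12 between ->]]]].
  exists (theta Q1 K1), (theta Q2 K2).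
  split; first by apply/pisotKP; exists Q1, K1.
  split; first by apply/pisotKP; exists Q2, K2.
  split; first exact/(pisot_lt_lex c1 c2).
  split=> // t /pisotKP[Q [K [c ->]]] [lt1 lt2]; apply: (between Q K c).
  by split; [apply/(pisot_lt_lex c1 c) | apply/(pisot_lt_lex c c2)].
Qed.

Local Notation fl Q := (Num.floor ((Q : int)%:~R * al)).

Lemma theta_gap (Q : int) :
  theta (Q + 1) (fl (Q + 1)) - theta Q (fl Q + 1) = (fl (Q + 1) - fl Q)%:~R + al.
Proof. by rewrite !(rmorphB, rmorphD) /=; field. Qed.

Lemma fl_step (Q : int) :
  fl (Q + 1) - fl Q = Num.floor al \/ fl (Q + 1) - fl Q = Num.floor al + 1.
Proof. by rewrite rmorphD /= mulrDl mul1r; apply: floorD_sub. Qed.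

Lemma exists_fl_step_neq (c : int) : exists Q : int, 0 < Q /\ fl (Q + 1) - fl Q != c.
Proof.
have [n step_neq] := exists_floor_step_neq (al_neq_int c).
by exists n.+1%:Z; split=> //; rewrite rmorphD /= -pmulrn natr1.
Qed.

Lemma FK_one : FK m (1 : R).
Proof.
apply/FKP; exists 1, (fl 1), 1, (fl 1 + 1); split.
- by apply/pisot_coordsP; lia.
- by apply/pisot_coordsP; lia.
- by right; split=> //; lia.
- by move=> Q K _; lia.
- by rewrite rmorphD /=; ring.
Qed.

Lemma FK_gap (Q : int) : 0 < Q -> FK m ((fl (Q + 1) - fl Q)%:~R + al).
Proof.
move=> Q_gt0; apply/FKP; exists Q, (fl Q + 1), (Q + 1), (fl (Q + 1)); split.
- by apply/pisot_coordsP; lia.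
- by apply/pisot_coordsP; lia.
- by left; lia.
- move=> Q' K' /pisot_coordsP[_ K'_bounds] between.
  have eQ : Q' = Q \/ Q' = Q + 1 by lia.
  by case: eQ => eQ; subst Q'; lia.
- by rewrite theta_gap.
Qed.

Lemma FK_eq : FK m = [set 1; al + (Num.floor al)%:~R; 1 + (al + (Num.floor al)%:~R)].
Proof.
apply/seteqP; split=> d /=.
  case/FKP=> Q1 [K1 [Q2 [K2 [/pisot_coordsP[Q1_gt0 K1_b] /pisot_coordsP[Q2_gt0 K2_b]]]]].
  move=> lex12 between ->.
  have [eQ|Q12] : Q1 = Q2 \/ Q1 < Q2 by lia.
    subst Q2; have -> : K2 = K1 + 1 by lia.
    by left; left; rewrite rmorphD /=; ring.
  have Q2_eq : Q2 = Q1 + 1.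
    apply: contrapT => Q2_neq; apply: (between (Q1 + 1) (fl (Q1 + 1))).
      by apply/pisot_coordsP; lia.
    lia.
  subst Q2; have K1_eq : K1 = fl Q1 + 1.
    apply: contrapT => K1_neq; apply: (between Q1 (fl Q1 + 1)).
      by apply/pisot_coordsP; lia.
    lia.
  have K2_eq : K2 = fl (Q1 + 1).
    apply: contrapT => K2_neq; apply: (between (Q1 + 1) (fl (Q1 + 1))).
      by apply/pisot_coordsP; lia.
    lia.
  rewrite K1_eq K2_eq theta_gap.
  by case: (fl_step Q1) => ->; [left; right | right]; rewrite ?rmorphD /=; ring.
case=> [[->|->]|->].
- exact: FK_one.
- have [Q [Q_gt0 step]] := exists_fl_step_neq (Num.floor al + 1).
  have [step_eq|step_eq] := fl_step Q; last by move: step; rewrite step_eq eqxx.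
  by rewrite addrC -step_eq; apply: FK_gap.
- have [Q [Q_gt0 step]] := exists_fl_step_neq (Num.floor al).
  have [step_eq|step_eq] := fl_step Q; first by move: step; rewrite step_eq eqxx.
  suff -> : 1 + (al + (Num.floor al)%:~R) = (fl (Q + 1) - fl Q)%:~R + al by apply: FK_gap.
  by rewrite step_eq rmorphD /=; ring.
Qed.

Lemma floor_al_lt : (Num.floor al)%:~R < al.
Proof. by rewrite lt_neqAle floor_le andbT eq_sym al_neq_int. Qed.

Lemma TK_min : 3 < w -> is_min (TK m) (al + (Num.floor al)%:~R).
Proof.
move=> w_gt3; set f := Num.floor al.
have f_lt := floor_al_lt; have /andP[f_le f_gt] := floor_itv al.
rewrite -/f rmorphD /= in f_le f_gt f_lt.
have f_ge1 : 1 <= f%:~R :> R by rewrite ler1z floor_ge_int; lra.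
have [t_coords conj_coords] := ratr_om_coords (f - 1) 1.
have x_theta : al + f%:~R = theta 1 (f - 1) by rewrite rmorphB /=; field.
split.
  split; first by rewrite x_theta; apply: alg_int_om.
  split; first lra.
  exists ((f - 1)%:~R + 1%:~R / 2), (1%:~R / 2); rewrite t_coords conj_coords -x_theta.
  split=> //; rewrite rmorphB /=; split; first by apply/andP; split; lra.
  by apply/eqP; lra.
move=> y [y_int [y_gt2 [u [v [def_y [/andP[c1 c2] c_neq0]]]]]].
rewrite def_y in y_int; have [K [Q [y_KQ conj_KQ]]] := alg_int_sqm_om y_int.
rewrite conj_KQ in c1 c2; rewrite y_KQ in def_y.
rewrite {y_int y_KQ conj_KQ c_neq0 u v}def_y in y_gt2 *.
have Qw : Q%:~R * w = theta Q K - (K%:~R - Q%:~R * al) :> R by field.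
have Q_gt0 : 0 < Q.
  by rewrite -(ltr_int R) -(pmulr_lgt0 _ (lt_trans _ w_gt3)) // Qw; lra.
have [Q1|Q_ge2] : Q = 1 \/ 2 <= Q by lia.
  move: c1 y_gt2; rewrite Q1 rmorph1 !mul1r => c1 y_gt2.
  have K_ge : f - 1 <= K.
    suff : f - 2 < K by lia.
    by rewrite -(ltr_int R) rmorphB /= -pmulrn; lra.
  by rewrite -(ler_int R) rmorphB /= in K_ge; lra.
have : 2 <= Q%:~R :> R by rewrite (ler_int R 2).
nra.
Qed.

Lemma lucas_pair_sqm_conj (a b : rat) (n : nat) : exists A0 B0 A1 B1 : rat,
  lucas_pair n (ratr a + ratr b * w) = (ratr A0 + ratr B0 * w, ratr A1 + ratr B1 * w) /\
  lucas_pair n (ratr a - ratr b * w) = (ratr A0 - ratr B0 * w, ratr A1 - ratr B1 * w).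
Proof.
elim: n => [|n [A0 [B0 [A1 [B1 [IHplus IHminus]]]]]] /=.
  by exists 2, 0, a, b; rewrite rmorph0 mul0r addr0 subr0 rmorph_nat.
exists A1, B1, (a * A1 + b * B1 * m%:R - A0), (a * B1 + b * A1 - B0).
by rewrite IHplus IHminus /=; split; congr (_, _);
  rewrite !(rmorphD, rmorphB, rmorphM, rmorph_nat) /= -sqm_sqr; ring.
Qed.

(* A root of unity trace [2 cos (2 k pi / n)] is a root of [V_n - 2], and so is its
   conjugate, which therefore lies in [[-2, 2]]. *)
Lemma UK_sub (x : R) :
  UK m x -> x = 1 \/ exists K : int, x = theta 1 K /\ x < 2 /\ al - 2 <= K%:~R.
Proof.
case=> x_gt0 [x_int [[a [b def_x]] [n [k [n_ge4 k_range _ def_cos]]]]].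
have x_lt2 : x < 2 by rewrite def_cos; have := cos_2pi_div_lt1 R k_range; lra.
have Vn_x : (lucas_pair n x).1 = 2.
  rewrite def_cos lucas_pair_cos /=.
  have -> : n%:R * (2 * k%:R * pi / n%:R) = 2 * k%:R * pi :> R.
    by field; rewrite pnatr_eq0; lia.
  by rewrite cos_2pi_mul mulr1.
have [A0 [B0 [A1 [B1 [V_plus V_minus]]]]] := lucas_pair_sqm_conj a b n.
have := congr1 fst V_plus; rewrite /= -def_x Vn_x => V2.
have [A0_2 B0_0] : A0 - 2 = 0 /\ B0 = 0.
  by apply: sqm_lin_indep; rewrite rmorphB /= rmorph_nat addrAC -V2 subrr.
have conj_le2 : `|ratr a - ratr b * w| <= 2.
  apply: (@lucas_eq2_norm_le2 _ _ n); first by lia.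
  by rewrite V_minus /= B0_0 rmorph0 mul0r subr0 (subr0_eq A0_2) rmorph_nat.
rewrite def_x in x_int; have [K [Q [x_KQ conj_KQ]]] := alg_int_sqm_om x_int.
rewrite conj_KQ ler_norml in conj_le2; have /andP[c1 c2] := conj_le2.
rewrite x_KQ in def_x.
rewrite {x_int x_KQ conj_KQ conj_le2 a b V_plus V_minus}def_x in x_gt0 x_lt2 *.
have w_gt2 := sqm_gt2.
have Qw : Q%:~R * w = theta Q K - (K%:~R - Q%:~R * al) :> R by field.
have Q_gt : -1 < Q by rewrite -(ltr_int R); nra.
have Q_lt : Q < 2 by rewrite -(ltr_int R); nra.
have [Q0|Q1] : Q = 0 \/ Q = 1 by lia.
  left; rewrite Q0 mul0r addr0 in x_gt0 x_lt2 *.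
  have K_gt0 : 0 < K by rewrite -(ltr0z R).
  have K_lt2 : K < 2 by rewrite -(ltr_int R).
  by have -> : K = 1 by lia.
by right; exists K; move: x_lt2 c1; rewrite Q1 rmorph1 !mul1r; do 2!split=> //; lra.
Qed.

Lemma UK_one : UK m (1 : R).
Proof.
split; first exact: ltr01.
split; first by have := alg_int_om 1 0; rewrite mul0r addr0.
split; first by exists 1, 0; rewrite rmorph1 rmorph0 mul0r addr0.
exists 6%N, 1%N; split=> //.
have -> : 2 * 1%:R * pi / 6%:R = pi / 3 :> R by field.
by rewrite cos_pi3.
Qed.

Lemma UK_sqm_gt3 : 3 < w -> UK m = [set 1 : R].
Proof.
move=> w_gt3; apply/seteqP; split=> x /=; last by move->; apply: UK_one.
case/UK_sub=> // -[K [-> [x_lt2 K_ge]]]; rewrite rmorph1 mul1r in x_lt2.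
have K_lt0 : K < 0 by rewrite -(ltrz0 R); lra.
have K_gtN1 : -1 < K by rewrite -(ltr_int R); lra.
lia.
Qed.

Lemma sqm5_lt3 : m = 5%N -> w < 3.
Proof. by move=> m5; have := sqm_sqr; have := sqm_gt2; rewrite m5; nra. Qed.

Lemma UK_sqm5 : m = 5%N -> UK m = [set (-1 + w) / 2; 1; (1 + w) / 2].
Proof.
move=> m5; have w_gt2 := sqm_gt2; have w_lt3 := sqm5_lt3 m5.
have w_sqrt5 : w = Num.sqrt 5 by rewrite /sqm m5.
apply/seteqP; split=> x /=.
  case/UK_sub=> [->|[K [-> [x_lt2 K_ge]]]]; first by left; right.
  rewrite rmorph1 mul1r in x_lt2 *.
  have K_lt1 : K < 1 by rewrite -(ltr_int R); lra.
  have K_gt : -2 < K by rewrite -(ltr_int R); lra.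
  have [->|->] : K = -1 \/ K = 0 by lia.
    by left; left; field.
  by right; field.
have cos_mem (n : nat) (y : R) : (4 <= n)%N -> y = 2 * cos (2 * pi / n%:R) ->
    exists n' k : nat, [/\ (4 <= n')%N, (1 <= k <= n'.-1)%N, coprime k n' &
      y = 2 * cos (2 * k%:R * pi / n'%:R)].
  by move=> n_ge4 ->; exists n, 1%N; rewrite mulr1 coprime1n; split=> //; lia.
case=> [[->|->]|->]; last 2 first.
- exact: UK_one.
- split; first lra.
  split; first by have := alg_int_om 0 1; congr alg_int; rewrite rmorph1; field.
  split; first by exists (1 / 2), (1 / 2); rewrite fmorph_div /= rmorph1 rmorph_nat; field.
  by apply: (cos_mem 10%N) => //; rewrite w_sqrt5 -cos_pi5; congr (2 * cos _); field.
split; first lra.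
split; first by have := alg_int_om (-1) 1; congr alg_int; rewrite rmorphN rmorph1; field.
split.
  by exists (- 1 / 2), (1 / 2); rewrite !fmorph_div rmorphN /= rmorph1 rmorph_nat; field.
by apply: (cos_mem 5%N) => //; rewrite w_sqrt5 -cos_2pi5.
Qed.

Lemma floor_sqm_lt : (Num.floor w)%:~R < w.
Proof. by rewrite lt_neqAle floor_le andbT -ratr_int sqm_irrational. Qed.

Lemma floor_al_even (j : int) : Num.floor w = 2 * j -> Num.floor al = j - 1.
Proof.
move=> s_eq; have := floor_sqm_lt; have /andP[_] := floor_itv w.
rewrite s_eq rmorphD rmorphM /= => w_lt w_gt; apply: floor_def.
by rewrite rmorphB /= subrK; apply/andP; split; lra.
Qed.

Lemma floor_al_odd (j : int) : Num.floor w = 2 * j + 1 -> Num.floor al = j.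
Proof.
move=> s_eq; have := floor_sqm_lt; have /andP[_] := floor_itv w.
rewrite s_eq !rmorphD rmorphM /= => w_lt w_gt; apply: floor_def.
by rewrite rmorphD /=; apply/andP; split; lra.
Qed.

Lemma sqm_gt3 : 2 < Num.floor w -> 3 < w.
Proof.
move=> s_gt2; have s_ge3 : 3 <= (Num.floor w)%:~R :> R by rewrite (ler_int R 3); lia.
by have := floor_sqm_lt; lra.
Qed.

Lemma floor_sqm_ge2 : 2 <= Num.floor w.
Proof. by rewrite floor_ge_int; have := sqm_gt2; lra. Qed.

Lemma UK_FK_TK_sqm_gt3 (x : R) : 3 < w -> x = al + (Num.floor al)%:~R ->
  UK m = [set 1 : R] /\ FK m = [set 1; x; 1 + x] /\ is_min (TK m) x.
Proof.
by move=> w_gt3 ->; split; [apply: UK_sqm_gt3 | split; [apply: FK_eq | apply: TK_min]].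
Qed.

Lemma FK_UK_sqm5 : m = 5%N -> FK m = UK m :> set R.
Proof.
move=> m5; have w_gt2 := sqm_gt2; have w_lt3 := sqm5_lt3 m5.
have floor_al0 : Num.floor al = 0 by apply: floor_def; apply/andP; split; lra.
rewrite UK_sqm5 // FK_eq floor_al0 addr0.
have -> : 1 + al = (1 + w) / 2 by field.
have -> : al = (-1 + w) / 2 by field.
by apply/seteqP; split=> x /=; tauto.
Qed.

End QuadraticField.

Theorem proposition2p2 (R : realType) (m : nat) :
  (5 <= m)%N -> squarefree_nat m -> (m %% 4 = 1)%N ->
  let s : int := Num.floor (@sqm R m) in
  [/\ (2 < s -> ~~ odd `|s|%N ->
        let x := (-3 + s%:~R + @sqm R m) / 2 in
        @UK R m = [set 1] /\ @FK R m = [set 1; x; 1 + x] /\ is_min (@TK R m) x),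
      (m = 5%N ->
        @UK R m = [set (-1 + @sqm R m) / 2; 1; (1 + @sqm R m) / 2] /\
        @FK R m = @UK R m /\
        (-1 + @sqm R m) / 2 = 2 * cos (2 * pi / 5) /\
        (1 + @sqm R m) / 2 = 2 * cos (2 * pi / 10)) &
      (odd `|s|%N ->
        let x := (-2 + s%:~R + @sqm R m) / 2 in
        @UK R m = [set 1] /\ @FK R m = [set 1; x; 1 + x] /\ is_min (@TK R m) x)].
Proof.
move=> m_ge5 m_sqfree m_mod4 s.
have s_ge2 : 2 <= s by apply: floor_sqm_ge2.
have s_half : s = 2 * (`|s|%N./2)%:Z + odd `|s|%N by apply: int_odd_double_half; lia.
set j : int := (`|s|%N./2)%:Z in s_half.
split=> [s_gt2 s_even x | m5 | s_odd x].
- rewrite (negbTE s_even) addr0 in s_half.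
  apply: UK_FK_TK_sqm_gt3 => //; first exact: sqm_gt3.
  have floor_al : Num.floor ((@sqm R m - 1) / 2) = j - 1 by apply: floor_al_even.
  by rewrite floor_al /x s_half rmorphB rmorphM /=; field.
- split; first exact: UK_sqm5.
  split; first exact: FK_UK_sqm5.
  have w_sqrt5 : @sqm R m = Num.sqrt 5 by rewrite /sqm m5.
  rewrite w_sqrt5 -cos_2pi5 -cos_pi5; split=> //.
  by congr (2 * cos _); field.
- rewrite s_odd in s_half; have s_gt2 : 2 < s by lia.
  apply: UK_FK_TK_sqm_gt3 => //; first exact: sqm_gt3.
  have floor_al : Num.floor ((@sqm R m - 1) / 2) = j by apply: floor_al_odd.
  by rewrite floor_al /x s_half rmorphD rmorphM /=; field.
Qed.
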